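(* Let $\mathcal M$ be an o-minimal structure in a language $\mathcal L$ with universe $M$, and $\mathcal N$ an expansion of $\mathcal M$ such that every open definable set is $\mathcal L$-definable and $\mathcal N$ admits a dimension function $\dim$ compatible with $\mathcal M$. Let $F:X\subseteq M^n\to M^m$ be an $\mathcal L$-definable map and $D\subseteq X$ a definable set with $\dim(X\setminus D)<\dim X$, such that the restriction of $F$ to $D$ is injective. Then there is an $\mathcal L$-definable set $Y\subseteq X$ with $\dim(X\setminus Y)<\dim X$ such that the restriction of $F$ to $Y$ is injective.
   Context: ''Definable'' means definable in $\mathcal N$ with parameters; ''$\mathcal L$-definable'' means definable in $\mathcal M$ with parameters. A dimension function compatible with $\mathcal M$ is a map $\dim$ from definable sets to $\{-\infty\}\cup\mathbb N$ such that for all definable $X,Y\subseteq M^n$, $a\in M$: (D1) $\dim\{a\}=0$, $\dim M=1$, $\dim X=-\infty$ iff $X=\emptyset$; (D2) $\dim(X\cup Y)=\max\{\dim X,\dim Y\}$; (D3) for a definable family $\{X_t\}_{t\in I}$ of pairwise disjoint sets: (a) each $\{t\in I:\dim X_t=d\}$ is definable; (b) if all $X_t$ have dimension $k$ then $\dim\bigcup_t X_t=\dim I+k$; (D4) definable bijections preserve $\dim$; (D5) on $\mathcal L$-definable sets $\dim$ is the o-minimal dimension; (D6) every definable $f:M^n\to M$ agrees with an $\mathcal L$-definable $F:M^n\to M$ outside a definable set of dimension $<n$. *)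

From mathcomp Require Import all_boot.
From Stdlib Require Import List.

Set Implicit Arguments.
Unset Strict Implicit.
Unset Printing Implicit Defensive.

Definition setfam (M : Type) := forall n : nat, (n.-tuple M -> Prop) -> Prop.

Section Defs.
Variable M : Type.
Variable lt : M -> M -> Prop.

Definition DLO : Prop :=
  (forall x, ~ lt x x) /\
  (forall x y z, lt x y -> lt y z -> lt x z) /\
  (forall x y, lt x y \/ x = y \/ lt y x) /\
  (forall x y, lt x y -> exists z, lt x z /\ lt z y) /\
  (forall x, exists y, lt x y) /\
  (forall x, exists y, lt y x).

(* A structure on M in the sense of van den Dries, with all parameters
   (points of M) definable. *)
Definition is_structure (S : setfam M) : Prop :=
  (forall n, S n (fun _ => False)) /\
  (forall n A B, S n A -> S n B -> S n (fun x => A x \/ B x)) /\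
  (forall n A, S n A -> S n (fun x => ~ A x)) /\
  (forall n m (A : n.-tuple M -> Prop) (B : m.-tuple M -> Prop),
      S n A -> S m B ->
      S (n + m) (fun z => exists x y, A x /\ B y /\ z = cat_tuple x y)) /\
  (forall n m (A : (n + m).-tuple M -> Prop),
      S (n + m) A -> S n (fun x => exists y : m.-tuple M, A (cat_tuple x y))) /\
  (forall n (i j : 'I_n), S n (fun x => tnth x i = tnth x j)) /\
  (forall a : M, S 1 (fun x => tnth x ord0 = a)).

(* intervals with endpoints in M ∪ {±∞} (None = -∞ on the left, +∞ on the right) *)
Definition in_interval (iv : option M * option M) (x : M) : Prop :=
  match iv.1 with None => True | Some a => lt a x end /\
  match iv.2 with None => True | Some b => lt x b end.

Definition ominimal (S : setfam M) : Prop :=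
  DLO /\ is_structure S /\
  S 2 (fun z => lt (tnth z ord0) (tnth z ord_max)) /\
  (forall A : 1.-tuple M -> Prop, S 1 A ->
     exists (pts : list M) (ivs : list (option M * option M)),
       forall x, A x <-> (In (tnth x ord0) pts \/
                          exists iv, In iv ivs /\ in_interval iv (tnth x ord0))).

Definition expansion (S S' : setfam M) : Prop :=
  is_structure S' /\ forall n A, S n A -> S' n A.

Definition in_box n (a b x : n.-tuple M) : Prop :=
  forall i, lt (tnth a i) (tnth x i) /\ lt (tnth x i) (tnth b i).

Definition open_set n (U : n.-tuple M -> Prop) : Prop :=
  forall x, U x -> exists a b, in_box a b x /\ forall y, in_box a b y -> U y.

(* dimensions: None = -oo *)
Definition dlt (e f : option nat) : Prop :=
  match e, f with
  | None, Some _ => True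
  | Some a, Some b => (a < b)%N
  | _, _ => False
  end.
Definition dmax (e f : option nat) : option nat :=
  match e, f with
  | None, _ => f
  | _, None => e
  | Some a, Some b => Some (maxn a b)
  end.
Definition dadd (e f : option nat) : option nat :=
  match e, f with
  | Some a, Some b => Some (a + b)%N
  | _, _ => None
  end.

Definition proj_interior n (X : n.-tuple M -> Prop) (d : nat) : Prop :=
  exists sigma : 'I_d -> 'I_n,
    (forall i j : 'I_d, (i < j)%N -> (sigma i < sigma j)%N) /\
    exists U : d.-tuple M -> Prop,
      (exists u, U u) /\ open_set U /\
      forall y, U y -> exists x, X x /\ y = [tuple tnth x (sigma i) | i < d].

Definition omin_dim_is n (X : n.-tuple M -> Prop) (e : option nat) : Prop :=
  match e with
  | None => forall x, ~ X x
  | Some d => (exists x, X x) /\ proj_interior X d /\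
              forall d', proj_interior X d' -> (d' <= d)%N
  end.

Definition graph_on n m (X : n.-tuple M -> Prop) (F : n.-tuple M -> m.-tuple M)
  : (n + m).-tuple M -> Prop :=
  fun z => exists x, X x /\ z = cat_tuple x (F x).

Definition fiber k n (Z : (k + n).-tuple M -> Prop) (t : k.-tuple M) : n.-tuple M -> Prop :=
  fun x => Z (cat_tuple t x).

(* dimension function on N (definable sets = S'), compatible with M (S) *)
Definition dim_function (S S' : setfam M)
  (dim : forall n, (n.-tuple M -> Prop) -> option nat) : Prop :=
  (forall a : M, dim 1 (fun x => tnth x ord0 = a) = Some 0%N) /\
  dim 1 (fun _ => True) = Some 1%N /\
  (forall n X, S' n X -> (dim n X = None <-> forall x, ~ X x)) /\
  (forall n X Y, S' n X -> S' n Y ->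
     dim n (fun x => X x \/ Y x) = dmax (dim n X) (dim n Y)) /\
  (forall k n (I : k.-tuple M -> Prop) (Z : (k + n).-tuple M -> Prop),
     S' k I -> S' (k + n) Z ->
     (forall t t', I t -> I t' -> t <> t' ->
        forall x, ~ (fiber Z t x /\ fiber Z t' x)) ->
     (forall d, S' k (fun t => I t /\ dim n (fiber Z t) = d)) /\
     (forall d, (forall t, I t -> dim n (fiber Z t) = d) ->
        dim n (fun x => exists t, I t /\ fiber Z t x) = dadd (dim k I) d)) /\
  (forall n m (X : n.-tuple M -> Prop) (Y : m.-tuple M -> Prop)
          (f : n.-tuple M -> m.-tuple M),
     S' n X -> S' m Y -> S' (n + m) (graph_on X f) ->
     (forall x, X x -> Y (f x)) ->
     (forall x x', X x -> X x' -> f x = f x' -> x = x') ->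
     (forall y, Y y -> exists x, X x /\ f x = y) ->
     dim n X = dim m Y) /\
  (forall n X, S n X -> omin_dim_is X (dim n X)) /\
  (forall n (f : n.-tuple M -> M),
     S' (n + 1) (graph_on (fun _ => True) (fun x => [tuple f x])) ->
     exists G : n.-tuple M -> M,
       S (n + 1) (graph_on (fun _ => True) (fun x => [tuple G x])) /\
       exists B, S' n B /\ dlt (dim n B) (Some n) /\
                 forall x, f x <> G x -> B x).

End Defs.

(* Take Y to be the set of points of X whose F-fibre in X is a singleton: it is
   L-definable from the graph of F, and F is injective on it.  A point of X \ Y
   lies either outside D or in the set Q of t in D whose F-fibre meets X \ D.
   As F is injective on D, the sets {y in X \ D | F y = F t}, t in Q, are
   pairwise disjoint and nonempty, so stratifying Q by the dimension of these
   sets and applying (D3) to each stratum gives dim Q <= dim (X \ D).  Hence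
   dim (X \ Y) <= dim (X \ D) < dim X. *)

From mathcomp Require Import all_boot.
From Stdlib Require Import FunctionalExtensionality PropExtensionality Classical.

Lemma pred_ext {T : Type} {A B : T -> Prop} : (forall x, A x <-> B x) -> A = B.
Proof.
by move=> AB; apply: functional_extensionality => x; apply: propositional_extensionality.
Qed.

Lemma ex_leqSn (A : nat -> Prop) N :
  (exists2 j, j <= N.+1 & A j) <-> (exists2 j, j <= N & A j) \/ A N.+1.
Proof.
split=> [[j] | [[j le_jN Aj] | AN]]; last by exists N.+1.
  by rewrite leq_eqVlt => /orP [/eqP -> | ]; [right | left; exists j].
by exists j => //; apply: leqW.
Qed.

Lemma ex_leq0 (A : nat -> Prop) : (exists2 j, j <= 0 & A j) <-> A 0.
Proof. by split=> [[j /[!leqn0] /eqP ->] | A0] //; exists 0. Qed.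

Section TupleSplit.
Context {M : Type}.

Definition lsplit {n m} (w : (n + m).-tuple M) : n.-tuple M :=
  [tuple tnth w (lshift m i) | i < n].
Definition rsplit {n m} (w : (n + m).-tuple M) : m.-tuple M :=
  [tuple tnth w (rshift n i) | i < m].

Lemma lsplit_cat {n m} (x : n.-tuple M) (y : m.-tuple M) : lsplit (cat_tuple x y) = x.
Proof. by apply: eq_from_tnth => i; rewrite tnth_mktuple tnth_lshift. Qed.

Lemma rsplit_cat {n m} (x : n.-tuple M) (y : m.-tuple M) : rsplit (cat_tuple x y) = y.
Proof. by apply: eq_from_tnth => i; rewrite tnth_mktuple tnth_rshift. Qed.

Definition coordmap {n k} (f : n.-tuple M -> k.-tuple M) : Prop :=
  exists pi : 'I_k -> 'I_n, forall x i, tnth (f x) i = tnth x (pi i).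

Lemma coordmap_lsplit n m : coordmap (@lsplit n m).
Proof. by exists (lshift m) => x i; rewrite tnth_mktuple. Qed.

Lemma coordmap_rsplit n m : coordmap (@rsplit n m).
Proof. by exists (@rshift n m) => x i; rewrite tnth_mktuple. Qed.

Lemma coordmap_comp {n k l} {f : n.-tuple M -> k.-tuple M} {g : k.-tuple M -> l.-tuple M} :
  coordmap f -> coordmap g -> coordmap (fun x => g (f x)).
Proof. by move=> [p fp] [q gq]; exists (fun i => p (q i)) => x i; rewrite gq fp. Qed.

Lemma coordmap_cat {n k l} {f : n.-tuple M -> k.-tuple M} {g : n.-tuple M -> l.-tuple M} :
  coordmap f -> coordmap g -> coordmap (fun x => cat_tuple (f x) (g x)).
Proof.
move=> [p fp] [q gq].
exists (fun i => match split i with inl a => p a | inr b => q b end) => x i.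
by case: (split_ordP i) => j ->; rewrite ?tnth_lshift ?tnth_rshift ?split_lshift ?split_rshift.
Qed.

Lemma coordmap_tnth {k} (i : 'I_k) : coordmap (fun s : k.-tuple M => [tuple tnth s i | _ < 1]).
Proof. by exists (fun _ => i) => x j; rewrite tnth_mktuple. Qed.

End TupleSplit.

Section Definable.
Context {M : Type} {S : setfam M}.
Hypothesis HS : is_structure S.

Lemma def_ext {n} {A B : n.-tuple M -> Prop} : (forall x, A x <-> B x) -> S n A -> S n B.
Proof. by move=> AB; rewrite (pred_ext AB). Qed.

Lemma def0 {n} : S n (fun _ => False).
Proof. by case: HS. Qed.

Lemma defU {n A B} : S n A -> S n B -> S n (fun x => A x \/ B x).
Proof. by case: HS => _ [defU _]; apply: defU. Qed.

Lemma defC {n A} : S n A -> S n (fun x => ~ A x).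
Proof. by case: HS => _ [_ [defC _]]; apply: defC. Qed.

Lemma defT {n} : S n (fun _ => True).
Proof. by apply: def_ext (defC (def0 (n := n))) => x; tauto. Qed.

Lemma defI {n A B} : S n A -> S n B -> S n (fun x => A x /\ B x).
Proof.
move=> SA SB; apply: def_ext (defC (defU (defC SA) (defC SB))) => x.
by split; [move=> AB; split; apply: NNPP; tauto | tauto].
Qed.

Lemma defX {n m} {A : n.-tuple M -> Prop} {B : m.-tuple M -> Prop} :
  S n A -> S m B -> S (n + m) (fun z => exists x y, A x /\ B y /\ z = cat_tuple x y).
Proof. by case: HS => _ [_ [_ [defX _]]]; apply: defX. Qed.

Lemma def_proj {n m} {A : (n + m).-tuple M -> Prop} :
  S (n + m) A -> S n (fun x => exists y : m.-tuple M, A (cat_tuple x y)).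
Proof. by case: HS => _ [_ [_ [_ [def_proj _]]]]; apply: def_proj. Qed.

Lemma def_diag {n} (i j : 'I_n) : S n (fun x => tnth x i = tnth x j).
Proof. by case: HS => _ [_ [_ [_ [_ [def_diag _]]]]]; apply: def_diag. Qed.

Lemma def_param (a : M) : S 1 (fun x => tnth x ord0 = a).
Proof. by case: HS => _ [_ [_ [_ [_ [_ def_param]]]]]; apply: def_param. Qed.

Lemma def_bigI {k n} {A : 'I_k -> n.-tuple M -> Prop} :
  (forall i, S n (A i)) -> S n (fun x => forall i, A i x).
Proof.
move=> SA.
suff Sj j : S n (fun x => forall i : 'I_k, i < j -> A i x).
  by apply: def_ext (Sj k) => x; split=> Ax i //; apply: Ax.
elim: j => [|j IHj].
  by apply: def_ext defT => x; split=> // _ [].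
have [ltjk | lekj] := ltnP j k; last first.
  apply: def_ext IHj => x; split=> Ax i ltij; apply: Ax; last exact: ltnW.
  exact: leq_trans (ltn_ord i) lekj.
apply: def_ext (defI IHj (SA (Ordinal ltjk))) => x; split.
  move=> [Ax Ajx] i; rewrite ltnS leq_eqVlt => /orP [/eqP eij | /Ax //].
  by have -> : i = Ordinal ltjk by apply: val_inj.
by move=> Ax; split=> [i /ltnW|]; apply: Ax.
Qed.

Lemma def_preim {n k} {f : n.-tuple M -> k.-tuple M} {A : k.-tuple M -> Prop} :
  coordmap f -> S k A -> S n (fun x => A (f x)).
Proof.
move=> [pi fE] SA.
pose G (w : (n + k).-tuple M) := forall i, tnth w (@rshift n k i) = tnth w (lshift k (pi i)).
have SG : S (n + k) G by apply: def_bigI => i; apply: def_diag.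
apply: def_ext (def_proj (defI SG (defX (defT (n := n)) SA))) => x; split.
  move=> [y [Gxy [x' [y' [_ [Ay' xy_eq]]]]]].
  have -> : f x = y.
    apply: eq_from_tnth => i; rewrite fE; move: (Gxy i).
    by rewrite tnth_rshift tnth_lshift.
  by rewrite -(rsplit_cat x y) xy_eq rsplit_cat.
move=> Afx; exists (f x); split; last by exists x, (f x).
by move=> i; rewrite tnth_rshift tnth_lshift fE.
Qed.

Lemma def_point {k} (t : k.-tuple M) : S k (fun s => s = t).
Proof.
have Scoord i : S k (fun s => tnth s i = tnth t i).
  apply: def_ext (def_preim (coordmap_tnth i) (def_param (tnth t i))) => s.
  by rewrite tnth_mktuple.
apply: def_ext (def_bigI Scoord) => s.
by split=> [/eq_from_tnth | ->].
Qed.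

Lemma def_exl {k n} {I : k.-tuple M -> Prop} {Z : (k + n).-tuple M -> Prop} :
  S k I -> S (k + n) Z -> S n (fun y => exists t, I t /\ Z (cat_tuple t y)).
Proof.
move=> SI SZ.
have SW := defI (def_preim (coordmap_rsplit n k) SI)
                (def_preim (coordmap_cat (coordmap_rsplit n k) (coordmap_lsplit n k)) SZ).
apply: def_ext (def_proj SW) => y.
by split=> [] [t]; rewrite ?lsplit_cat ?rsplit_cat; exists t; rewrite ?lsplit_cat ?rsplit_cat.
Qed.

Lemma def_fiber {k n} {Z : (k + n).-tuple M -> Prop} (t : k.-tuple M) :
  S (k + n) Z -> S n (fiber Z t).
Proof.
move=> SZ; apply: def_ext (def_exl (def_point t) SZ) => y.
by split=> [[s [-> Zty]] | Zty] //; exists t.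
Qed.

Lemma def_eq_split {n} : S (n + n) (fun w : (n + n).-tuple M => lsplit w = rsplit w).
Proof.
pose E (i : 'I_n) (w : (n + n).-tuple M) := tnth w (lshift n i) = tnth w (rshift n i).
apply: def_ext (def_bigI (A := E) (fun i => def_diag _ _)) => w; rewrite /E.
split=> [Ew | eqw i]; first by apply: eq_from_tnth => i; rewrite !tnth_mktuple.
by move: (congr1 (fun t => tnth t i) eqw); rewrite !tnth_mktuple.
Qed.

Lemma def_bigU_nat {n} (A : nat -> n.-tuple M -> Prop) N :
  (forall j, S n (A j)) -> S n (fun x => exists2 j, j <= N & A j x).
Proof.
move=> SA; elim: N => [|N IHN].
  by apply: def_ext (SA 0) => x; rewrite ex_leq0.
by apply: def_ext (defU IHN (SA N.+1)) => x; rewrite ex_leqSn.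
Qed.

End Definable.

Section InjectivityLocus.
Context {M : Type} {n m : nat} (X : n.-tuple M -> Prop) (F : n.-tuple M -> m.-tuple M).

Definition kernel_pair (w : (n + n).-tuple M) : Prop :=
  X (lsplit w) /\ X (rsplit w) /\ F (lsplit w) = F (rsplit w).

Definition inj_locus (x : n.-tuple M) : Prop :=
  X x /\ forall y, X y -> F y = F x -> y = x.

Lemma graph_on_cat x z : graph_on X F (cat_tuple x z) <-> X x /\ z = F x.
Proof.
split=> [[x' [Xx' xz_eq]] | [Xx ->]]; last by exists x.
have ex : x = x' by rewrite -(lsplit_cat x z) xz_eq lsplit_cat.
have ez : z = F x' by rewrite -(rsplit_cat x z) xz_eq rsplit_cat.
by rewrite ex ez.
Qed.

Lemma kernel_pair_cat x y : kernel_pair (cat_tuple x y) <-> X x /\ X y /\ F x = F y.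
Proof. by rewrite /kernel_pair lsplit_cat rsplit_cat. Qed.

Lemma inj_locus_inj x y : inj_locus x -> inj_locus y -> F x = F y -> x = y.
Proof. by move=> [Xx _] [_ injy]; apply: injy. Qed.

Lemma not_inj_locus x : X x -> ~ inj_locus x -> exists y, X y /\ F y = F x /\ y <> x.
Proof.
move=> Xx not_inj; apply: NNPP => no_y; apply: not_inj; split=> // y Xy eqF.
by apply: NNPP => neq; apply: no_y; exists y.
Qed.

Context {S : setfam M} (HS : is_structure S).

Lemma def_kernel_pair : S (n + m) (graph_on X F) -> S (n + n) kernel_pair.
Proof.
move=> SF.
have graph_l := coordmap_cat (coordmap_comp (coordmap_lsplit _ _) (coordmap_lsplit _ _))
                             (coordmap_rsplit (M := M) (n + n) m).
have graph_r := coordmap_cat (coordmap_comp (coordmap_lsplit _ _) (coordmap_rsplit _ _))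
                             (coordmap_rsplit (M := M) (n + n) m).
have SW := defI HS (def_preim HS graph_l SF) (def_preim HS graph_r SF).
apply: def_ext _ (def_proj HS SW) => w.
split=> [[z] | [Xl [Xr eqF]]].
  by rewrite !lsplit_cat !rsplit_cat !graph_on_cat => -[[Xl ->] [Xr eqF]].
by exists (F (lsplit w)); rewrite !lsplit_cat !rsplit_cat !graph_on_cat eqF.
Qed.

Lemma def_inj_locus : S n X -> S (n + n) kernel_pair -> S n inj_locus.
Proof.
move=> SX SK.
have Scoll := def_proj HS (defI HS SK (defC HS (def_eq_split HS))).
apply: def_ext _ (defI HS SX (defC HS Scoll)) => x.
split=> -[Xx Hx]; split=> //.
  move=> y Xy eqF; apply: NNPP => neq; apply: Hx.
  exists y; rewrite kernel_pair_cat lsplit_cat rsplit_cat.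
  by split=> [|/esym //]; split=> //; split.
move=> [y]; rewrite kernel_pair_cat lsplit_cat rsplit_cat => -[[_ [Xy eqF]] neq].
by apply: neq; rewrite (Hx y Xy (esym eqF)).
Qed.

End InjectivityLocus.

Definition dle (e f : option nat) : Prop :=
  match e, f with
  | None, _ => True
  | Some a, Some b => a <= b
  | Some _, None => False
  end.

Lemma dle_refl e : dle e e.
Proof. by case: e => /=. Qed.

Lemma dle_trans e f g : dle e f -> dle f g -> dle e g.
Proof. by case: e => [a|]; case: f => [b|]; case: g => [c|] //=; apply: leq_trans. Qed.

Lemma dle_dlt e f g : dle e f -> dlt f g -> dlt e g.
Proof. by case: e => [a|]; case: f => [b|]; case: g => [c|] //=; apply: leq_ltn_trans. Qed.

Lemma dle_dmaxl e f : dle e (dmax e f).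
Proof. by case: e => [a|]; case: f => [b|] //=; rewrite leq_maxl. Qed.

Lemma dle_dmax e f g : dle e g -> dle f g -> dle (dmax e f) g.
Proof. by case: e => [a|]; case: f => [b|]; case: g => [c|] //= ag bg; rewrite geq_max ag. Qed.

Lemma dle_dadd e k : dle e (dadd e (Some k)).
Proof. by case: e => //= a; apply: leq_addr. Qed.

Section DimensionFunction.
Context {M : Type} {lt : M -> M -> Prop} {S S' : setfam M}
  {dim : forall n, (n.-tuple M -> Prop) -> option nat}.
Hypotheses (HS' : is_structure S') (Hdim : dim_function lt S S' dim).

Lemma dim_None_empty {n} {A : n.-tuple M -> Prop} x : S' n A -> A x -> dim n A <> None.
Proof. by case: Hdim => _ [_ [dimN _]] SA Ax /(dimN n A SA) /(_ x). Qed.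

Lemma dimU {n} {A B : n.-tuple M -> Prop} :
  S' n A -> S' n B -> dim n (fun x => A x \/ B x) = dmax (dim n A) (dim n B).
Proof. by case: Hdim => _ [_ [_ [dimU _]]]; apply: dimU. Qed.

Lemma dim_sub {n} {A B : n.-tuple M -> Prop} :
  S' n A -> S' n B -> (forall x, A x -> B x) -> dle (dim n A) (dim n B).
Proof.
move=> SA SB AB.
have AUB : (fun x => A x \/ B x) = B by apply: pred_ext => x; split=> [[/AB|]|]; auto.
by have := dimU SA SB; rewrite AUB => ->; apply: dle_dmaxl.
Qed.

Lemma dim_bigU_le {n} (A : nat -> n.-tuple M -> Prop) e N :
  (forall j, S' n (A j)) -> (forall j, dle (dim n (A j)) e) ->
  dle (dim n (fun x => exists2 j, j <= N & A j x)) e.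
Proof.
move=> SA Ae; elim: N => [|N IHN].
  by rewrite (pred_ext (fun x => ex_leq0 (A^~ x))).
rewrite (pred_ext (fun x => ex_leqSn (A^~ x) N)) dimU //; last exact: def_bigU_nat.
exact: dle_dmax.
Qed.

Section DisjointFibers.
Context {k n : nat} {P : k.-tuple M -> Prop} {Z : (k + n).-tuple M -> Prop}
  {A : n.-tuple M -> Prop}.
Hypotheses (SP : S' k P) (SZ : S' (k + n) Z) (SA : S' n A).
Hypothesis fibers_disj : forall t t' x, fiber Z t x -> fiber Z t' x -> t = t'.
Hypothesis fibers_sub : forall t x, P t -> fiber Z t x -> A x.

Lemma fibers_pairwise_disjoint (R : k.-tuple M -> Prop) t t' :
  R t -> R t' -> t <> t' -> forall x, ~ (fiber Z t x /\ fiber Z t' x).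
Proof. by move=> _ _ neq x [Ztx Zt'x]; apply: neq (fibers_disj _ _ _ Ztx Zt'x). Qed.

Let stratum j t := P t /\ dim n (fiber Z t) = Some j.

Lemma def_dim_stratum j : S' k (stratum j).
Proof.
case: Hdim => _ [_ [_ [_ [D3 _]]]].
have [def_strata _] := D3 k n P Z SP SZ (fibers_pairwise_disjoint P).
exact: def_strata (Some j).
Qed.

Lemma dim_stratum_le j : dle (dim k (stratum j)) (dim n A).
Proof.
case: Hdim => _ [_ [_ [_ [D3 _]]]].
have [_ dim_union] := D3 k n _ Z (def_dim_stratum j) SZ (fibers_pairwise_disjoint _).
apply: dle_trans (dle_dadd _ j) _; rewrite -(dim_union _ (fun t st => st.2)).
apply: dim_sub (def_exl HS' (def_dim_stratum j) SZ) SA _.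
by move=> x [t [[Pt _] Ztx]]; apply: fibers_sub Pt Ztx.
Qed.

Lemma dim_index_le : (forall t, P t -> exists x, fiber Z t x) -> dle (dim k P) (dim n A).
Proof.
move=> fibers_nonempty.
pose N := odflt 0 (dim n (fun _ => True)).
apply: dle_trans (dim_bigU_le _ _ N def_dim_stratum dim_stratum_le).
apply: dim_sub SP (def_bigU_nat HS' _ N def_dim_stratum) _ => t Pt.
have [x Ztx] := fibers_nonempty t Pt.
have SZt := def_fiber HS' t SZ.
case dimZt: (dim n (fiber Z t)) => [j|]; last by case: (dim_None_empty x SZt Ztx).
exists j; last by split.
have := dim_sub SZt (defT HS') (fun _ _ => I).
by rewrite dimZt /N; case: (dim n _).
Qed.

End DisjointFibers.

Lemma dim_non_inj_locus_le {n m} (X : n.-tuple M -> Prop) (F : n.-tuple M -> m.-tuple M)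
    (D : n.-tuple M -> Prop) :
  S' n X -> S' (n + n) (kernel_pair X F) -> S' n D ->
  (forall x y, D x -> D y -> F x = F y -> x = y) ->
  dle (dim n (fun x => X x /\ ~ inj_locus X F x)) (dim n (fun x => X x /\ ~ D x)).
Proof.
move=> SX SK SD injD.
pose XD x := X x /\ ~ D x.
pose Z w := kernel_pair X F w /\ D (lsplit w) /\ ~ D (rsplit w).
pose Q t := exists y, Z (cat_tuple t y).
have SXD : S' n XD := defI HS' SX (defC HS' SD).
have SDl := def_preim HS' (coordmap_lsplit n n) SD.
have SDr := def_preim HS' (coordmap_rsplit n n) SD.
have SZ : S' (n + n) Z := defI HS' SK (defI HS' SDl (defC HS' SDr)).
have SQ : S' n Q := def_proj HS' SZ.
have ZE t y : Z (cat_tuple t y) <-> (X t /\ X y /\ F t = F y) /\ D t /\ ~ D y.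
  by rewrite /Z kernel_pair_cat lsplit_cat rsplit_cat.
have dimQ : dle (dim n Q) (dim n XD).
  apply: (dim_index_le SQ SZ SXD) => [t t' y /ZE [[_ [_ eqF]] [Dt _]] /ZE [[_ [_ eqF']] [Dt' _]]
                                    | t y _ /ZE | t [y Zty]]; last by exists y.
    by apply: injD => //; rewrite eqF eqF'.
  by rewrite /XD; tauto.
have non_inj_sub x : X x /\ ~ inj_locus X F x -> XD x \/ Q x.
  move=> [Xx /(not_inj_locus _ _ _ Xx) [y [Xy [eqF neq]]]].
  have [Dx | nDx] := classic (D x); last by left.
  right; exists y; apply/ZE; split=> //; split=> // Dy.
  by apply: neq; apply: injD.
have SnI : S' n (fun x => X x /\ ~ inj_locus X F x) :=
  defI HS' SX (defC HS' (def_inj_locus _ _ HS' SX SK)).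
apply: dle_trans (dim_sub SnI (defU HS' SXD SQ) non_inj_sub) _.
by rewrite dimU //; apply: dle_dmax (dle_refl _) dimQ.
Qed.

End DimensionFunction.

Theorem lemma2p3 (M : Type) (lt : M -> M -> Prop) (S S' : setfam M)
  (dim : forall n, (n.-tuple M -> Prop) -> option nat)
  (HM : ominimal lt S) (HN : expansion S S')
  (Hopen : forall n (U : n.-tuple M -> Prop), S' n U -> open_set lt U -> S n U)
  (Hdim : dim_function lt S S' dim)
  (n m : nat) (X : n.-tuple M -> Prop) (F : n.-tuple M -> m.-tuple M)
  (HX : S n X) (HF : S (n + m) (graph_on X F))
  (D : n.-tuple M -> Prop) (HD : S' n D) (HDX : forall x, D x -> X x)
  (HdimD : dlt (dim n (fun x => X x /\ ~ D x)) (dim n X))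
  (Hinj : forall x y, D x -> D y -> F x = F y -> x = y) :
  exists Y : n.-tuple M -> Prop,
    S n Y /\ (forall x, Y x -> X x) /\
    dlt (dim n (fun x => X x /\ ~ Y x)) (dim n X) /\
    (forall x y, Y x -> Y y -> F x = F y -> x = y).
Proof.
have [_ [HS _]] := HM.
have [HS' SS'] := HN.
have SK := def_kernel_pair _ _ HS HF.
exists (inj_locus X F); split; first exact: def_inj_locus.
split; first by move=> x [].
split; last exact: inj_locus_inj.
have dim_nonY := dim_non_inj_locus_le HS' Hdim _ _ _ (SS' _ _ HX) (SS' _ _ SK) HD Hinj.
exact: dle_dlt dim_nonY HdimD.
Qed.
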